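(* For every metric space $M$, $\dim_{\mathrm{Box}}(M)\le\dim_{\mathrm{MST}}(M)$.
   Context: A minimal spanning tree (MST) on a finite set of points in a metric space is a spanning tree of the complete graph on those points that minimizes the sum of the edge lengths; for an edge $e$, $\|e\|$ is the distance between its endpoints, and for a tree $T$ and $d\ge 0$, $E_d(T)=\sum_{e\in T}\|e\|^d$. The MST dimension is \[ \dim_{\mathrm{MST}}(M):=\inf\{d\ge 0:\ \exists C<\infty \text{ such that } E_d(T)\le C \text{ for every MST } T \text{ on any finite set of distinct points of } M\}, \] with $\inf\emptyset=\infty$. For $\epsilon>0$ let $N(\epsilon)\in\{0,1,2,\dots\}\cup\{\infty\}$ be the maximal number of pairwise disjoint open balls of radius $\epsilon$ centered at points of $M$. The upper box dimension is \[ \dim_{\mathrm{Box}}(M):=\limsup_{\epsilon\to0}\frac{\log N(\epsilon)}{\log(1/\epsilon)}. \] *)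

From HB Require Import structures.
From mathcomp Require Import all_boot all_order all_algebra.
From mathcomp Require Import all_classical all_reals all_analysis.
Set Implicit Arguments. Unset Strict Implicit. Unset Printing Implicit Defensive.
Import Order.TTheory GRing.Theory Num.Theory.
Local Open Scope classical_set_scope.
Local Open Scope ring_scope.

Definition is_metric (R : realType) (T : Type) (d : T -> T -> R) : Prop :=
  [/\ (forall x y, 0 <= d x y),
      (forall x y, d x y = 0 <-> x = y),
      (forall x y, d x y = d y x) &
      (forall x y z, d x z <= d x y + d y z)].

(* Graphs on the vertex set 'I_n (finite set of n distinct points p : 'I_n -> T).
   An (undirected) edge {i,j} with i < j is stored as the ordered pair (i,j). *)
Definition edge_set_ok n (E : {set 'I_n * 'I_n}) : bool :=
  [forall e in E, (e.1 < e.2)%N].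

Definition adj n (E : {set 'I_n * 'I_n}) : rel 'I_n :=
  fun i j => ((i, j) \in E) || ((j, i) \in E).

Definition g_connected n (E : {set 'I_n * 'I_n}) : Prop :=
  forall i j : 'I_n, connect (adj E) i j.

Definition g_acyclic n (E : {set 'I_n * 'I_n}) : Prop :=
  forall s : seq 'I_n, uniq s -> (3 <= size s)%N -> ~~ cycle (adj E) s.

Definition spanning_tree n (E : {set 'I_n * 'I_n}) : Prop :=
  [/\ edge_set_ok E, g_connected E & g_acyclic E].

Definition Epow (R : realType) (T : Type) (d : T -> T -> R) n (p : 'I_n -> T)
    (a : R) (E : {set 'I_n * 'I_n}) : R :=
  \sum_(e in E) powR (d (p e.1) (p e.2)) a.

Definition is_MST (R : realType) (T : Type) (d : T -> T -> R) n (p : 'I_n -> T)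
    (E : {set 'I_n * 'I_n}) : Prop :=
  spanning_tree E /\
  forall E' : {set 'I_n * 'I_n}, spanning_tree E' ->
    \sum_(e in E) d (p e.1) (p e.2) <= \sum_(e in E') d (p e.1) (p e.2).

(* dim_MST(M) = inf { a >= 0 | exists C, forall MST T on finite set of distinct
   points, E_a(T) <= C }, with inf of the empty set = +oo *)
Definition dim_MST (R : realType) (T : Type) (d : T -> T -> R) : \bar R :=
  ereal_inf [set a%:E | a in [set a : R | 0 <= a /\
    exists C : R, forall (n : nat) (p : 'I_n -> T), injective p ->
      forall E, is_MST d p E -> Epow d p a E <= C]].

Definition open_ball (R : realType) (T : Type) (d : T -> T -> R) (x : T) (r : R)
  : set T := [set z | d x z < r].

Definition Npack (R : realType) (T : Type) (d : T -> T -> R) (eps : R) : \bar R :=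
  ereal_sup [set (n%:R)%:E | n in [set n : nat | exists p : 'I_n -> T,
     injective p /\ forall i j : 'I_n, i != j ->
       open_ball d (p i) eps `&` open_ball d (p j) eps = set0]].

Definition elog (R : realType) (x : \bar R) : \bar R :=
  match x with
  | (r%:E)%E => if 0 < r then (ln r)%:E else -oo%E
  | +oo%E => +oo%E
  | -oo%E => -oo%E
  end.

(* upper box dimension: limsup_{eps -> 0+} log N(eps) / log (1/eps),
   written out as inf_{delta>0} sup_{0<eps<delta} *)
Definition dim_Box (R : realType) (T : Type) (d : T -> T -> R) : \bar R :=
  ereal_inf [set ereal_sup [set (elog (Npack d eps) * ((ln (eps^-1))^-1)%:E)%E
                             | eps in [set eps : R | 0 < eps < delta]]
            | delta in [set delta : R | 0 < delta]].

From HB Require Import structures.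
From mathcomp Require Import all_boot all_order all_algebra.
From mathcomp Require Import all_classical all_reals all_analysis.
Import Order.TTheory GRing.Theory Num.Theory.
Local Open Scope classical_set_scope.
Local Open Scope ring_scope.

(* Take n points whose open eps-balls are pairwise disjoint, hence pairwise
   at distance >= eps.  A minimal spanning tree on them has at least n/2 edges,
   so its weight E_a is at least (n/2) eps^a.  If E_a <= C for all MSTs, this
   gives N(eps) <= K eps^-a with K = max(1, 2C), hence
   log N(eps) / log(1/eps) <= a + log K / log(1/eps), which is below a + eta
   for eps small enough. *)

Definition star m : {set 'I_m.+1 * 'I_m.+1} :=
  [set e | (e.1 == ord0) && (e.2 != ord0)].

Lemma spanning_tree_star m : spanning_tree (star m).
Proof.
split.
- by apply/forall_inP => -[x y]; rewrite inE /= => /andP[/eqP -> hy]; rewrite lt0n.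
- have adj0 (i : 'I_m.+1) : i != ord0 -> adj (star m) ord0 i && adj (star m) i ord0.
    by move=> hi; rewrite /adj !inE /= hi orbT.
  have from0 (i : 'I_m.+1) : connect (adj (star m)) ord0 i.
    by have [->|/adj0/andP[h _]] := eqVneq i ord0; [exact: connect0|exact: connect1].
  have to0 (i : 'I_m.+1) : connect (adj (star m)) i ord0.
    by have [->|/adj0/andP[_ h]] := eqVneq i ord0; [exact: connect0|exact: connect1].
  by move=> i j; apply: connect_trans (to0 i) (from0 j).
(* Every edge of the star contains ord0, so every other vertex of a cycle is
   ord0, which three distinct vertices cannot achieve. *)
- move=> [|x [|y [|z t]]] // hu _; move: hu => /=.
  rewrite !inE !negb_or => /and4P[/and3P[hxy hxz _] /andP[hyz hyt] _ _].
  apply/negP; rewrite /adj => /and3P[hA hB hp].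
  move: hA hB; rewrite !inE /=.
  have [hy|hy] := eqVneq y ord0; last first.
    by rewrite /= ?orbF ?andbT => /eqP hx /eqP hz; move: hxz; rewrite hx hz eqxx.
  subst y => _ _.
  have hz : z != ord0 by rewrite eq_sym.
  case: t hyt hp => [|u t] /=.
    by move=> _ /andP[+ _]; rewrite !inE /= (negbTE hz) (negbTE hxy).
  rewrite inE negb_or => /andP[hu _] /andP[+ _].
  by rewrite !inE /= (negbTE hz) eq_sym (negbTE hu).
Qed.

Lemma exists_MST {R : realType} {T : Type} (d : T -> T -> R) {m} (p : 'I_m.+1 -> T) :
  exists E, is_MST d p E.
Proof.
pose P E := `[< @spanning_tree m.+1 E >].
have P_star : P (star m) by apply/asboolP; exact: spanning_tree_star.
have [E /asboolP hE hmin] :=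
  arg_minP (fun E : {set 'I_m.+1 * 'I_m.+1} => \sum_(e in E) d (p e.1) (p e.2)) P_star.
by exists E; split => // E' hE'; apply: hmin; apply/asboolP.
Qed.

(* Each vertex of a connected graph on at least two vertices lies on an edge. *)
Lemma connected_card_vertices_le n (E : {set 'I_n * 'I_n}) :
  g_connected E -> (1 < n)%N -> (n <= 2 * #|E|)%N.
Proof.
move=> hc n1.
pose V := ([set e.1 | e in E] :|: [set e.2 | e in E])%SET.
have covered : ([set: 'I_n] \subset V)%SET.
  apply/fintype.subsetP => i _.
  have [j hji] : exists j : 'I_n, j != i.
    have [->|h] := eqVneq i (Ordinal (ltnW n1)); first by exists (Ordinal n1).
    by exists (Ordinal (ltnW n1)); rewrite eq_sym.
  case/connectP: (hc i j) => -[|u s] /=; first by move=> _ hl; rewrite -hl eqxx in hji.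
  case/andP=> /orP[h|h] _ _; apply/setUP.
    by left; apply/imsetP; exists (i, u).
  by right; apply/imsetP; exists (u, i).
have := subset_leq_card covered; rewrite cardsT card_ord => /leq_trans-> //.
rewrite (leq_trans (leq_card_setU _ _)) // mul2n -addnn.
by rewrite leq_add // leq_imset_card.
Qed.

Section PackingBound.
Variables (R : realType) (T : Type) (d : T -> T -> R).
Hypothesis d_metric : is_metric d.

Lemma disjoint_balls_dist_ge (x y : T) (eps : R) :
  open_ball d x eps `&` open_ball d y eps = set0 -> eps <= d x y.
Proof.
case: d_metric => d_ge0 d_eq0 _ _ hdisj.
rewrite leNgt; apply/negP => hlt.
have dyy : d y y = 0 by apply/d_eq0.
suff : (open_ball d x eps `&` open_ball d y eps) y by rewrite hdisj.
by split; rewrite /open_ball //= dyy (le_lt_trans (d_ge0 x y)).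
Qed.

Lemma Epow_ge_card n (p : 'I_n -> T) (a eps : R) (E : {set 'I_n * 'I_n}) :
  0 <= a -> 0 <= eps -> (forall e, e \in E -> eps <= d (p e.1) (p e.2)) ->
  #|E|%:R * powR eps a <= Epow d p a E.
Proof.
case: d_metric => d_ge0 _ _ _ ha he hE.
rewrite /Epow mulr_natl -sumr_const; apply: ler_sum => e /hE heps.
by apply: ge0_ler_powR; rewrite ?nnegrE.
Qed.

Lemma packing_card_le (a C eps : R) n (p : 'I_n -> T) :
  0 <= a -> 0 < eps <= 1 ->
  (forall i j : 'I_n, i != j -> open_ball d (p i) eps `&` open_ball d (p j) eps = set0) ->
  (forall E, is_MST d p E -> Epow d p a E <= C) ->
  n%:R * powR eps a <= Num.max 1 (2 * C).
Proof.
move=> ha /andP[e0 e1] hdisj hC.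
have pa_le1 : powR eps a <= 1.
  have -> : 1 = powR 1 a by rewrite powR1.
  by rewrite ge0_ler_powR ?nnegrE ?(ltW e0).
have [n_le1|n_gt1] := leqP n 1.
  rewrite le_max; apply/orP; left.
  by rewrite -[leRHS](mulr1 1) ler_pM ?ler0n ?powR_ge0 ?lern1.
case: n p hdisj hC n_gt1 => [//|m] p hdisj hC n_gt1.
have [E hE] := exists_MST d p.
have edge_long e : e \in E -> eps <= d (p e.1) (p e.2).
  case: hE => -[/forall_inP edges_ok _ _] _ /edges_ok hlt.
  by apply: disjoint_balls_dist_ge; apply: hdisj; rewrite neq_ltn hlt.
have n_le : (m.+1%:R : R) <= 2 * #|E|%:R.
  by rewrite -natrM ler_nat connected_card_vertices_le //; case: hE => -[].
rewrite le_max; apply/orP; right.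
apply: le_trans (ler_wpM2r (powR_ge0 _ _) n_le) _.
rewrite -mulrA ler_wpM2l //.
by apply: le_trans (hC E hE); apply: Epow_ge_card => //; exact: ltW.
Qed.

Lemma Npack_le (a C eps : R) :
  0 <= a -> 0 < eps <= 1 ->
  (forall n (p : 'I_n -> T), injective p ->
     forall E, is_MST d p E -> Epow d p a E <= C) ->
  (Npack d eps <= (Num.max 1 (2 * C) / powR eps a)%:E)%E.
Proof.
move=> ha heps hC; apply: ge_ereal_sup => _ [n [p [hinj hdisj]] <-].
have /andP[e0 _] := heps.
rewrite lee_fin ler_pdivlMr ?powR_gt0 //.
exact: packing_card_le ha heps hdisj (hC n p hinj).
Qed.

End PackingBound.

Lemma elog_div_ln_inv_le (R : realType) (N : \bar R) (K a eta eps : R) :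
  1 <= K -> 0 < eta -> 0 < eps < 1 -> eps < expR (- (ln K / eta)) ->
  (N <= (K / powR eps a)%:E)%E ->
  (elog N * ((ln eps^-1)^-1)%:E <= (a + eta)%:E)%E.
Proof.
move=> K1 eta0 /andP[e0 e1] eps_small hN.
have K0 : 0 < K by apply: lt_le_trans K1.
have L0 : 0 < ln eps^-1 by rewrite ln_gt0 // invf_gt1.
have lnV_eps : ln eps^-1 = - ln eps by rewrite lnV.
move: hN; case: N => [r| |] hN /=; last first.
- by rewrite gt0_mulNye ?leNye // lte_fin invr_gt0.
- by rewrite leye_eq in hN.
case: ifP => r0; last by rewrite gt0_mulNye ?leNye // lte_fin invr_gt0.
rewrite -EFinM lee_fin ler_pdivrMr // mulrDl.
have ln_r : ln r <= ln K + a * ln eps^-1.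
  rewrite lee_fin in hN.
  apply: le_trans (_ : ln r <= ln (K / powR eps a)) _.
    by rewrite ler_ln // posrE divr_gt0 ?powR_gt0.
  by rewrite ln_div ?posrE ?powR_gt0 // ln_powR lnV_eps mulrN.
have ln_K : ln K <= eta * ln eps^-1.
  have : ln eps < - (ln K / eta).
    by rewrite -[X in _ < X]expRK ltr_ln ?posrE ?expR_gt0.
  by rewrite ltrNr -lnV_eps ltr_pdivrMr // mulrC => /ltW.
by apply: le_trans ln_r _; rewrite addrC lerD2l.
Qed.

Theorem lemma5 (R : realType) (T : Type) (d : T -> T -> R) :
  is_metric d -> (dim_Box d <= dim_MST d)%E.
Proof.
move=> d_metric; apply: le_ereal_inf_tmp => _ [a [ha [C hC]] <-].
apply/lee_addgt0Pr => eta eta0; rewrite -EFinD.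
pose K : R := Num.max 1 (2 * C).
have K1 : 1 <= K by rewrite le_max lexx.
pose delta : R := Num.min 1 (expR (- (ln K / eta))).
have delta0 : 0 < delta by rewrite lt_min ltr01 expR_gt0.
apply: le_trans (ereal_inf_lbound _) _; first by exists delta.
apply: ge_ereal_sup => _ [eps /andP[e0 +] <-]; rewrite lt_min => /andP[e1 eps_small].
apply: (@elog_div_ln_inv_le _ _ K) => //; first by rewrite e0.
by apply: Npack_le; rewrite ?e0 ?(ltW e1).
Qed.
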